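(* For every finite alphabet $\Sigma$ with $|\Sigma|\ge1$, the minimum deterministic finite automaton over $\Sigma$ recognizing $L_{\mathrm{UNIQ}}$ has at least $2^{|\Sigma|-1}$ states.
   Context: Let $\Sigma$ be a finite alphabet and $\$\notin\Sigma$ a delimiter symbol; $\Sigma_\$=\Sigma\cup\{\$\}$. The bigram map $\Phi$ sends a string $z\in\$\Sigma^*\$$ to the vector $\Phi(z)\in\mathbb{N}^{\Sigma_\$^2}$ whose $(i,j)$ entry is the number of positions at which the two-letter string $ij$ occurs as a contiguous factor of $z$ (counting overlaps). $L_{\mathrm{UNIQ}}\subseteq\Sigma^*$ is the set of $w\in\Sigma^*$ such that the only $z\in\$\Sigma^*\$$ with $\Phi(z)=\Phi(\$w\$)$ is $z=\$w\$$ (this language is regular). *)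

From mathcomp Require Import all_boot.
Set Implicit Arguments. Unset Strict Implicit. Unset Printing Implicit Defensive.

(* Alphabet Sigma is a finType; Sigma_$ is [option Sigma] with None = $. *)
Definition delim (S : Type) : option S := None.

Definition wrap (S : Type) (w : seq S) : seq (option S) :=
  delim S :: rcons (map Some w) (delim S).

(* Phi(z)(i,j): number of positions k with z_k = i and z_(k+1) = j
   (overlapping occurrences of the factor ij). *)
Definition bigram (S : eqType) (z : seq (option S)) (i j : option S) : nat :=
  count (fun p => (p.1 == i) && (p.2 == j)) (zip z (behead z)).

Definition Phi_eq (S : eqType) (z z' : seq (option S)) : Prop :=
  forall i j, bigram z i j = bigram z' i j.

Definition L_UNIQ (S : eqType) (w : seq S) : Prop :=
  forall w' : seq S, Phi_eq (wrap w') (wrap w) -> w' = w.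

Record dfa (A : finType) := DFA {
  dfa_state : finType;
  dfa_s0 : dfa_state;
  dfa_trans : dfa_state -> A -> dfa_state;
  dfa_final : pred dfa_state }.

Definition dfa_accepts (A : finType) (M : dfa A) (w : seq A) : bool :=
  @dfa_final A M (foldl (@dfa_trans A M) (@dfa_s0 A M) w).

Definition dfa_recognizes (A : finType) (M : dfa A) (L : seq A -> Prop) : Prop :=
  forall w, dfa_accepts M w <-> L w.

From Pilot Require Import Defs.
From mathcomp Require Import all_boot.
From mathcomp Require Import zify.

Set Implicit Arguments. Unset Strict Implicit. Unset Printing Implicit Defensive.

(* Proof strategy (a Myhill-Nerode fooling-set argument).
   Fix a letter c.  To every subset A of Sigma \ {c} associate the word
   u_A = enum A ++ [c] (the letters of A, each once, followed by c).
   For i in Sigma \ {c}, the word u_A ++ [i; i] lies in L_UNIQ iff i is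
   not in A:
   - if i is not in A, the walk $ u_A i i $ is determined by its bigrams:
     every vertex before the final block i i $ occurs once as a source
     of a bigram, so each next letter is forced (walk reconstruction);
   - if i is in A, moving the loop (i, i) to the first occurrence of i
     gives a different word with the same bigram vector.
   Hence distinct subsets A are separated by a suffix i i, so a DFA for
   L_UNIQ reaches pairwise distinct states after reading the u_A, and it
   has at least 2^(|Sigma|-1) states. *)

(* The list of adjacent pairs of a word; Phi(z) is its multiset. *)
Definition pairs (T : Type) (u : seq T) : seq (T * T) := zip u (behead u).

Lemma pairs_cons (T : Type) (x y : T) (s : seq T) :
  pairs (x :: y :: s) = (x, y) :: pairs (y :: s).
Proof. by []. Qed.

Lemma pairs_split (T : Type) (s1 s2 : seq T) (x : T) :
  pairs (s1 ++ x :: s2) = pairs (rcons s1 x) ++ pairs (x :: s2).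
Proof.
elim: s1 => [|y [|z s1] IH] //.
by rewrite [_ ++ _]cat_cons [rcons _ _]rcons_cons !pairs_cons IH.
Qed.

Lemma sources_pairs (T : Type) (x : T) (t : seq T) :
  map fst (pairs (x :: t)) = belast x t.
Proof. by elim: t x => [|y t IH] x //; rewrite pairs_cons /= IH. Qed.

Lemma Phi_eqP (S : eqType) (z z' : seq (option S)) :
  Phi_eq z z' <-> perm_eq (pairs z) (pairs z').
Proof.
have count_pair u a b : count (fun p => (p.1 == a) && (p.2 == b)) u =
    count_mem (a, b) u by apply: eq_count => -[? ?]; rewrite /= xpair_eqE.
split=> [Hz | /permP Hz a b]; last exact: Hz.
by apply/allP => -[a b] _ /=; apply/eqP; rewrite -!count_pair; apply: Hz.
Qed.

Lemma pairs_move_loop (T : eqType) (P Q R : seq T) (i : T) :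
  perm_eq (pairs (P ++ i :: i :: Q ++ i :: R))
          (pairs (P ++ i :: Q ++ i :: i :: R)).
Proof.
rewrite perm_sym !pairs_split perm_cat2l.
have -> : pairs (i :: Q ++ i :: i :: R) = pairs (rcons (i :: Q) i) ++ (i, i) :: pairs (i :: R).
  by rewrite -cat_cons pairs_split.
have -> : pairs (i :: i :: Q ++ i :: R) = (i, i) :: pairs (rcons (i :: Q) i) ++ pairs (i :: R).
  by rewrite pairs_cons -cat_cons pairs_split.
by rewrite -[(i, i) :: pairs (i :: R)]cat1s perm_catCA.
Qed.

Lemma wrapE (S : Type) (w : seq S) : Defs.wrap w = None :: map Some w ++ [:: None].
Proof. by rewrite /Defs.wrap cats1. Qed.

Lemma Phi_eq_move_loop (S : eqType) (P Q R : seq S) (i : S) :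
  Phi_eq (Defs.wrap (P ++ i :: i :: Q ++ i :: R)) (Defs.wrap (P ++ i :: Q ++ i :: i :: R)).
Proof.
apply/Phi_eqP; rewrite !wrapE !map_cat !map_cons !map_cat !map_cons -!catA !cat_cons -!catA.
exact: (pairs_move_loop (None :: map Some P) (map Some Q) (map Some R ++ [:: None])).
Qed.

Section WalkReconstruction.
(* A walk x :: r with the same pairs as a reference walk, and the same
   last vertex, is recovered letter by letter. *)
Variable T : eqType.

(* If x is not a source further along the reference walk, the only pair
   leaving x is (x, y), so the walk must continue with y. *)
Lemma walk_forced_step (x y : T) (t r : seq T) :
  perm_eq (pairs (x :: r)) (pairs (x :: y :: t)) -> x \notin belast y t ->
  exists2 r', r = y :: r' & perm_eq (pairs (y :: r')) (pairs (y :: t)).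
Proof.
case: r => [|a r] Hp Hx; first by move/perm_size: Hp.
rewrite !pairs_cons in Hp.
have : (x, a) \in (x, y) :: pairs (y :: t) by rewrite -(perm_mem Hp) mem_head.
rewrite inE => /orP[/eqP[Eay] | /(map_f fst)].
  by subst a; exists r; last rewrite -(perm_cons (x, y)).
by rewrite /= sources_pairs (negbTE Hx).
Qed.

Lemma walk_final_loop (i e : T) (r : seq T) :
  perm_eq (pairs (i :: r)) [:: (i, i); (i, e)] -> last i r = e -> r = [:: i; e].
Proof.
case: r => [|b [|d [|? ?]]] Hp //=; try by move/perm_size: Hp.
move=> Ed; subst e; have : (b, d) \in [:: (i, i); (i, d)].
  by rewrite -(perm_mem Hp) /pairs /= !inE eqxx orbT.
by rewrite !inE !xpair_eqE => /orP[] /andP[/eqP-> _].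
Qed.

Lemma walk_unique (i e : T) : i != e -> forall (s : seq T) (x : T) (r : seq T),
  uniq (x :: s) -> i \notin x :: s -> e \notin s ->
  perm_eq (pairs (x :: r)) (pairs (x :: s ++ [:: i; i; e])) -> last x r = e ->
  r = s ++ [:: i; i; e].
Proof.
move=> Hie; elim=> [|y s IH] x r Hu Hi He Hp Hl.
  have Hx : x \notin belast i [:: i; e].
    by move: Hi; rewrite /= !inE eq_sym => /negbTE->.
  have [r' Er Hp'] := walk_forced_step Hp Hx; subst r.
  by rewrite (walk_final_loop Hp' Hl).
have sources : belast y (s ++ [:: i; i; e]) = y :: s ++ [:: i; i].
  by rewrite -[[:: i; i; e]]/([:: i; i] ++ [:: e]) catA cats1 belast_rcons.
move: Hu Hi He; rewrite /= !inE !negb_or => /andP[Hxys Hys] /andP[Hix His] /andP[_ Hes].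
have Hx : x \notin belast y (s ++ [:: i; i; e]).
  by move: Hxys; rewrite sources inE mem_cat !inE !negb_or [x == i]eq_sym Hix => /andP[-> ->].
have [r' Er Hp'] := walk_forced_step Hp Hx; subst r.
by rewrite (IH y r') //= inE negb_or.
Qed.

End WalkReconstruction.

Lemma distinct_word_in_L (S : finType) (s : seq S) (c i : S) :
  uniq s -> c \notin s -> i \notin s -> i != c -> L_UNIQ (s ++ [:: c; i; i]).
Proof.
move=> Hu Hc Hi Hic w'.
have word_split : map Some (s ++ [:: c; i; i]) ++ [:: None] =
    map Some (rcons s c) ++ [:: Some i; Some i; None].
  by rewrite -cats1 !map_cat -!catA.
rewrite !wrapE word_split => /Phi_eqP Hp.
suff : map Some w' ++ [:: None] = map Some (s ++ [:: c; i; i]) ++ [:: None].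
  by rewrite !cats1 => Ew; apply: (inj_map (@Some_inj _)); apply: rcons_injl Ew.
rewrite word_split; apply: (walk_unique (isT : Some i != None)) Hp _.
- rewrite /= (map_inj_uniq (@Some_inj _)) rcons_uniq Hc Hu !andbT.
  by apply/mapP => -[].
- by rewrite inE /= (mem_map (@Some_inj _)) mem_rcons inE negb_or Hic.
- by apply/mapP => -[].
- by rewrite last_cat.
Qed.

(* If i already occurs in s, then moving the loop i i of $ s c i i $ to
   that occurrence gives a different word with the same bigram vector. *)
Lemma repeated_word_notin_L (S : finType) (s : seq S) (c i : S) :
  c \notin s -> i \in s -> ~ L_UNIQ (s ++ [:: c; i; i]).
Proof.
move=> Hc Hi HL; case/splitPr: Hi Hc HL => a b Hc.
have -> : (a ++ i :: b) ++ [:: c; i; i] = a ++ i :: (b ++ [:: c]) ++ [:: i; i].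
  by rewrite -catA /= -catA.
move=> /(_ _ (Phi_eq_move_loop a (b ++ [:: c]) [::] i)) /(congr1 (index c)).
move: Hc; rewrite mem_cat inE !negb_or => /and3P[Hca Hci Hcb].
rewrite !index_cat /= (negbTE Hca) [i == c]eq_sym (negbTE Hci).
by rewrite !index_cat !mem_cat (negbTE Hcb) /= eqxx mem_seq1 eqxx; lia.
Qed.

Definition dfa_run (A : finType) (M : dfa A) (u : seq A) : dfa_state M :=
  foldl (@dfa_trans A M) (@dfa_s0 A M) u.

Lemma dfa_accepts_cat (A : finType) (M : dfa A) (u v : seq A) :
  dfa_accepts M (u ++ v) = dfa_final (foldl (@dfa_trans A M) (dfa_run M u) v).
Proof. by rewrite /dfa_accepts foldl_cat. Qed.

Lemma dfa_run_separated (A : finType) (M : dfa A) (L : seq A -> Prop) (u u' v : seq A) :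
  dfa_recognizes M L -> L (u ++ v) -> ~ L (u' ++ v) -> dfa_run M u != dfa_run M u'.
Proof.
move=> HM Hu Hu'; apply/eqP => Erun; apply: Hu'.
by apply/HM; rewrite dfa_accepts_cat -Erun -dfa_accepts_cat; apply/HM.
Qed.

Definition fooling_word (S : finType) (c : S) (A : {set S}) : seq S := enum A ++ [:: c].

Lemma fooling_word_separated (S : finType) (c : S) (A B : {set S}) (i : S) :
  A \subset [set~ c] -> B \subset [set~ c] -> i \in B -> i \notin A ->
  exists2 v, L_UNIQ (fooling_word c A ++ v) & ~ L_UNIQ (fooling_word c B ++ v).
Proof.
move=> HA HB HiB HiA.
have c_notin (C : {set S}) : C \subset [set~ c] -> c \notin enum C.
  by move=> HC; rewrite mem_enum; apply/negP => /(subsetP HC); rewrite !inE eqxx.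
have Hic : i != c by have := subsetP HB i HiB; rewrite !inE.
exists [:: i; i]; rewrite -catA.
- by apply: distinct_word_in_L (enum_uniq _) (c_notin _ HA) _ Hic; rewrite mem_enum.
- by apply: repeated_word_notin_L (c_notin _ HB) _; rewrite mem_enum.
Qed.

Lemma fooling_states_injective (S : finType) (M : dfa S) (c : S) :
  dfa_recognizes M (@L_UNIQ S) ->
  {in powerset [set~ c] &, injective (dfa_run M \o fooling_word c)}.
Proof.
move=> HM.
have included (A B : {set S}) : A \subset [set~ c] -> B \subset [set~ c] ->
    dfa_run M (fooling_word c A) = dfa_run M (fooling_word c B) -> B \subset A.
  move=> HA HB Erun; apply/subsetP => i HiB; apply/negPn/negP => HiA.
  have [v Hin Hout] := fooling_word_separated HA HB HiB HiA.
  by move: (dfa_run_separated HM Hin Hout); rewrite Erun eqxx.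
move=> A B; rewrite !inE => HA HB Erun.
by apply/eqP; rewrite eqEsubset (included _ _ HB HA (esym Erun)) (included _ _ HA HB Erun).
Qed.

Theorem theorem3 (S : finType) (hS : 0 < #|S|) (M : dfa S) :
  dfa_recognizes M (@L_UNIQ S) -> 2 ^ (#|S| - 1) <= #|@dfa_state S M|.
Proof.
move=> HM; case/card_gt0P: hS => c _.
have run_inj := @fooling_states_injective S M c HM.
(* 2 ^ (|S| - 1) subsets of S \ {c}, mapped injectively into the states. *)
rewrite subn1 -(cardsC1 c) -card_powerset -(card_in_imset run_inj).
exact: max_card.
Qed.
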